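(* Let $X,X_1$ be i.i.d. positive random variables with $\mathbb{E}X=1$, let $p\ge2$ be an integer and let $1<\alpha\le p+2$. Suppose $\mathbb{P}\{X\ge x\}=O(x^{-p-\alpha})$ as $x\to\infty$. Then, as $n\to\infty$, $$\mathbb{E}\frac{X_1^{2p}}{\left(\frac1nX_1+1\right)^{p+1}}=O(n^{p-\alpha+2})$$ and $$\mathbb{E}\frac{X_1^{2p}}{\left(\frac1nX_1+1\right)^{p+1}}X_1^2=O(n^{p-\alpha+2}\log n).$$ *)

From HB Require Import structures.
From mathcomp Require Import all_boot all_order all_algebra.
From mathcomp Require Import all_classical all_reals all_analysis.

From HB Require Import structures.
From mathcomp Require Import all_boot all_order all_algebra.
From mathcomp Require Import all_classical all_reals all_analysis.
From mathcomp Require Import measurable_realfun.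
From mathcomp Require Import ring lra.
Import numFieldNormedType.Exports.
Import Order.TTheory GRing.Theory Num.Theory.
Local Open Scope classical_set_scope.
Local Open Scope ring_scope.

(* Cutting the range of X into dyadic layers [2^k, 2^(k+1)) gives, for any
   nondecreasing h >= 0, E h(X) <= h(2^K) + sum_(k >= K) h(2^(k+1)) P(X >= 2^k).
   The integrands are h(y) = y^b / (y/n + 1)^m with m = p + 1 and b = 2p or
   b = 2p + 2; interpolating between y^b (for y <= n) and n^m y^(b-m) (for y >= n)
   gives h(y) <= n^(b-s) y^s for every s in [b-m, b]. Against the tail
   P(X >= 2^k) = O(2^(-k(p+alpha))) the series is then geometric of ratio
   2^(s-p-alpha). For the first moment take s = p + alpha - 2; for the second take
   s = p + alpha - 1/ln n, which costs only the constant n^(1/ln n) = e while the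
   geometric sum grows like ln n. *)

Lemma lt_pow2_truncn {R : realType} (x : R) : x < 2 ^+ Num.truncn x.
Proof.
apply: (lt_le_trans (truncnS_gt x)).
by rewrite -natrX ler_nat ltn_expl.
Qed.

Lemma dyadic_bracket {R : realType} (x : R) (K : nat) : 2 ^+ K <= x ->
  exists2 j : nat, (K <= j)%N & 2 ^+ j <= x < 2 ^+ j.+1.
Proof.
move=> Kx.
have [m x_lt mmin] := ex_minnP (ex_intro (fun m => x < 2 ^+ m) _ (lt_pow2_truncn x)).
have K_lt_m : (K < m)%N.
  rewrite ltnNge; apply/negP => mK.
  have : (2 : R) ^+ m <= 2 ^+ K by rewrite ler_eXn2l // ltr1n.
  by move=> /le_trans/(_ Kx); rewrite leNgt x_lt.
case: m x_lt mmin K_lt_m => // j xj jmin Kj.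
exists j => //; rewrite xj andbT leNgt; apply/negP => /jmin.
by rewrite ltnn.
Qed.

Lemma gt0_powRD {R : realType} (x r s : R) :
  0 < x -> x `^ (r + s) = x `^ r * x `^ s.
Proof. by move=> x_gt0; rewrite powRD // (gt_eqF x_gt0) implybT. Qed.

Lemma powR_exprn {R : realType} (a s : R) k :
  0 <= a -> (a ^+ k) `^ s = (a `^ s) ^+ k.
Proof. by move=> a_ge0; rewrite -powR_mulrn // powRAC powR_mulrn // powR_ge0. Qed.

Section dyadic_layers.
Context {d} {T : measurableType d} {R : realType} (P : probability T R).
Context {X : T -> R}.
Hypotheses (mX : measurable_fun setT X) (X_gt0 : forall w, 0 < X w).
Variables (h : R -> R) (K : nat).
Hypotheses (h_ge0 : forall x, 0 < x -> 0 <= h x)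
  (h_homo : forall x y, 0 < x -> x <= y -> h x <= h y).

Let level k := [set w | (2 : R) ^+ k <= X w].

Let measurable_level k : measurable (level k).
Proof.
have -> : level k = X @^-1` `[(2 : R) ^+ k, +oo[%classic.
  by apply/seteqP; split => w /=; rewrite in_itv /= andbT.
by rewrite -[X @^-1` _]setTI; apply: mX => //; exact: measurable_itv.
Qed.

Let weight k := if (K <= k)%N then h (2 ^+ k.+1) else 0.

Let weight_ge0 k : 0 <= weight k.
Proof. by rewrite /weight; case: ifP => // _; apply/h_ge0/exprn_gt0. Qed.

Let layer k w : \bar R := ((weight k)%:E * (\1_(level k) w)%:E)%E.

Let layer_ge0 k w : (0 <= layer k w)%E.
Proof. by rewrite mule_ge0 // lee_fin. Qed.

Let measurable_layer k : measurable_fun setT (layer k).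
Proof.
apply: emeasurable_funM; first exact: measurable_cst.
exact/measurable_EFinP/measurable_indic.
Qed.

(* If 2^j <= X w < 2^(j+1) with j >= K, the j-th layer alone dominates h (X w). *)
Let le_dyadic_layers w :
  ((h (X w))%:E <= (h (2 ^+ K))%:E + \sum_(k <oo) layer k w)%E.
Proof.
have hK_ge0 : 0 <= h (2 ^+ K) by apply/h_ge0/exprn_gt0.
have [XK|KX] := ltP (X w) (2 ^+ K).
  apply: lee_paddr; first exact: nneseries_ge0.
  by rewrite lee_fin h_homo // ltW.
apply: lee_paddl; first by rewrite lee_fin.
have [j Kj /andP[jX Xj]] := dyadic_bracket _ _ KX.
apply: le_trans (nneseries_lim_ge j.+1 (fun k _ _ => layer_ge0 k w)).
rewrite big_nat_recr //=; apply: lee_paddl; first exact: sume_ge0.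
rewrite /layer /weight Kj indicE mem_set // mule1 lee_fin.
by rewrite h_homo // ltW.
Qed.

Lemma integral_le_dyadic_geometric (D r : R) :
  measurable_fun setT (h \o X) -> 0 <= D -> 0 < r < 1 ->
  (forall k, (K <= k)%N ->
     ((h (2 ^+ k.+1))%:E * P [set w | (2 ^+ k <= X w)%R] <= (D * r ^+ k)%:E)%E) ->
  (\int[P]_w (h (X w))%:E <= (h (2 ^+ K) + D / (1 - r))%:E)%E.
Proof.
move=> mh D_ge0 /andP[r_gt0 r_lt1] layer_le.
have hK_ge0 : 0 <= h (2 ^+ K) by apply/h_ge0/exprn_gt0.
have msum : measurable_fun setT (fun w => \sum_(k <oo) layer k w)%E.
  exact: ge0_emeasurable_sum (fun k x _ _ => layer_ge0 k x)
                             (fun k _ => measurable_layer k).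
apply: le_trans (_ : \int[P]_w ((h (2 ^+ K))%:E + \sum_(k <oo) layer k w)
                     <= _)%E.
  apply: ge0_le_integral => //.
  - by move=> w _; rewrite lee_fin h_ge0.
  - exact/measurable_EFinP.
  - exact/emeasurable_funD.
rewrite ge0_integralD //; last by move=> w _; exact: nneseries_ge0.
rewrite integral_cst // integral_nneseries // EFinD; apply: leeD.
  rewrite -[leRHS]mule1 lee_wpmul2l ?lee_fin //; exact: probability_le1.
apply: (@le_trans _ _ (\sum_(k <oo) (D * r ^+ k)%:E)%E).
  apply: lee_nneseries => [k _ _ | k _]; first exact: integral_ge0.
  rewrite ge0_integralZl_EFin //; last exact/measurable_EFinP/measurable_indic.
  rewrite integral_indic // setIT /weight.
  case: ifP => Kk; first exact: layer_le.
  by rewrite mul0e lee_fin mulr_ge0 // exprn_ge0 // ltW.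
apply: lime_le.
  by apply: is_cvg_nneseries => k _ _; rewrite lee_fin mulr_ge0 // exprn_ge0 // ltW.
apply: nearW => n; rewrite sumEFin lee_fin.
have r_norm : `|r| < 1 by rewrite ger0_norm // ltW.
by have := geometric_le_lim n D_ge0 r_gt0 r_norm; rewrite /series.
Qed.

Lemma integral_le_powR_tail (q C M s : R) :
  measurable_fun setT (h \o X) -> 0 <= C -> 0 <= M -> s < q ->
  (forall k, (K <= k)%N ->
     (P [set w | (2 ^+ k <= X w)%R] <= (C * (2 `^ (- q)) ^+ k)%:E)%E) ->
  (forall y, 0 < y -> h y <= M * y `^ s) ->
  (\int[P]_w (h (X w))%:E
     <= (h (2 ^+ K) + M * C * 2 `^ s / (1 - 2 `^ (s - q)))%:E)%E.
Proof.
move=> mh C_ge0 M_ge0 s_lt_q tail h_le.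
have ratio_gt0 : 0 < 2 `^ (s - q) by rewrite powR_gt0.
have ratio_lt1 : 2 `^ (s - q) < 1.
  by rewrite /powR gt_eqF // expR_lt1 pmulr_llt0 ?subr_lt0 // ln_gt0 // ltr1n.
apply: integral_le_dyadic_geometric => //.
- by rewrite !mulr_ge0 // powR_ge0.
- by rewrite ratio_gt0.
move=> k Kk.
apply: le_trans (_ : (h (2 ^+ k.+1))%:E * (C * (2 `^ (- q)) ^+ k)%:E <= _)%E.
  by rewrite lee_wpmul2l ?tail // lee_fin h_ge0 // exprn_gt0.
rewrite -EFinM lee_fin.
apply: le_trans (_ : M * (2 ^+ k.+1) `^ s * (C * 2 `^ (- q) ^+ k) <= _).
  by rewrite ler_wpM2r ?h_le ?exprn_gt0 // mulr_ge0 // exprn_ge0 // powR_ge0.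
rewrite powR_exprn // gt0_powRD // exprMn exprS.
by rewrite le_eqVlt; apply/orP; left; apply/eqP; ring.
Qed.

End dyadic_layers.

Definition damped_pow {R : realFieldType} (n : R) (b m : nat) (y : R) :=
  y ^+ b / (y / n + 1) ^+ m.

Section damped_pow.
Context {R : realFieldType} (n : R) (b m : nat).
Hypothesis n_gt0 : 0 < n.

Let denom_gt0 y : 0 < y -> 0 < y / n + 1.
Proof. by move=> y_gt0; rewrite ltr_pwDr // divr_ge0 // ltW. Qed.

Lemma damped_pow_ge0 y : 0 < y -> 0 <= damped_pow n b m y.
Proof.
by move=> y_gt0; rewrite divr_ge0 // exprn_ge0 // ltW ?denom_gt0.
Qed.

Lemma damped_pow_le_exprn y : 0 < y -> damped_pow n b m y <= y ^+ b.
Proof.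
move=> y_gt0; have denom_ge1 : 1 <= (y / n + 1) ^+ m.
  by rewrite exprn_ege1 // lerDr divr_ge0 // ltW.
rewrite ler_pdivrMr ?exprn_gt0 ?denom_gt0 //.
by rewrite ler_peMr // exprn_ge0 // ltW.
Qed.

Hypothesis m_le_b : (m <= b)%N.

(* y^b / (y/n + 1)^m = y^(b-m) (y / (y/n + 1))^m, a product of nondecreasing
   factors. *)
Lemma damped_pow_homo x y :
  0 < x -> x <= y -> damped_pow n b m x <= damped_pow n b m y.
Proof.
move=> x_gt0 xy; have y_gt0 := lt_le_trans x_gt0 xy.
have split_pow z :
    0 < z -> damped_pow n b m z = z ^+ (b - m) * (z / (z / n + 1)) ^+ m.
  by move=> z_gt0; rewrite /damped_pow exprMn exprVn mulrA -exprD subnK.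
rewrite !split_pow //; apply: ler_pM.
- by rewrite exprn_ge0 // ltW.
- by rewrite exprn_ge0 // divr_ge0 // ltW ?denom_gt0.
- by rewrite lerXn2r // nnegrE ltW.
have ratio_ge0 z : 0 < z -> z / (z / n + 1) \is Num.nneg.
  by move=> z_gt0; rewrite nnegrE divr_ge0 // ltW // denom_gt0.
rewrite lerXn2r ?ratio_ge0 //.
rewrite ler_pdivrMr ?denom_gt0 // mulrAC ler_pdivlMr ?denom_gt0 //.
have -> : x * (y / n + 1) = x * y / n + x by ring.
have -> : y * (x / n + 1) = x * y / n + y by ring.
by rewrite lerD2l.
Qed.

Lemma damped_pow_le_large y : 0 < y ->
  damped_pow n b m y <= y ^+ (b - m) * n ^+ m.
Proof.
move=> y_gt0; have yn_gt0 : 0 < y / n by rewrite divr_gt0.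
have -> : y ^+ (b - m) * n ^+ m = y ^+ b / (y / n) ^+ m.
  rewrite -{2}(subnK m_le_b) exprD exprMn exprVn invfM invrK mulrA mulfK //.
  by rewrite expf_neq0 // gt_eqF.
apply: ler_wpM2l; first by rewrite exprn_ge0 // ltW.
rewrite lef_pV2 ?posrE ?exprn_gt0 ?denom_gt0 //.
by rewrite lerXn2r ?nnegrE ?lerDl ?ltW ?denom_gt0.
Qed.

End damped_pow.

Lemma damped_pow_le_powR {R : realType} (n y s : R) (b m : nat) :
  0 < n -> 0 < y -> (m <= b)%N -> (b - m)%:R <= s <= b%:R ->
  damped_pow n b m y <= n `^ (b%:R - s) * y `^ s.
Proof.
move=> n_gt0 y_gt0 m_le_b /andP[s_ge s_le].
have [n_ge0 y_ge0] := (ltW n_gt0, ltW y_gt0).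
have [y_le_n|n_lt_y] := leP y n.
  apply: le_trans (damped_pow_le_exprn _ _ _ n_gt0 _ y_gt0) _.
  rewrite -powR_mulrn // -{1}(subrK s b%:R) gt0_powRD //.
  apply: ler_wpM2r; first exact: powR_ge0.
  by rewrite ge0_ler_powR ?nnegrE // subr_ge0.
apply: le_trans (damped_pow_le_large _ _ _ n_gt0 m_le_b _ y_gt0) _.
set t := s - (b - m)%:R; have t_ge0 : 0 <= t by rewrite subr_ge0.
have -> : y `^ s = y ^+ (b - m) * y `^ t.
  by rewrite -powR_mulrn // -gt0_powRD // addrC subrK.
have -> : n ^+ m = n `^ (b%:R - s) * n `^ t.
  rewrite -powR_mulrn // -gt0_powRD //.
  by congr (_ `^ _); rewrite /t natrB //; ring.
rewrite mulrCA; apply: ler_wpM2l; first exact: powR_ge0.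
apply: ler_wpM2l; first exact: exprn_ge0.
by rewrite ge0_ler_powR ?nnegrE // ltW.
Qed.

Lemma measurable_damped_pow d (T : measurableType d) (R : realType) (X : T -> R)
    (n : R) (b m : nat) :
  measurable_fun setT X -> (forall w, 0 < X w) -> 0 < n ->
  measurable_fun setT (damped_pow n b m \o X).
Proof.
move=> mX X_gt0 n_gt0.
(* On the range of X, replace y by |y| so that the denominator never vanishes. *)
have -> : damped_pow n b m \o X = (fun y => y ^+ b / (`|y| / n + 1) ^+ m) \o X.
  by apply: funext => w /=; rewrite gtr0_norm.
apply: measurableT_comp => //; apply: continuous_measurable_fun => y.
apply: cvgM; first exact: exprn_continuous.
apply: cvgV; first by rewrite expf_neq0 // gt_eqF // ltr_pwDr // divr_ge0 // ltW.
apply: (@continuous_comp _ _ _ (fun z => `|z| / n + 1) (fun z => z ^+ m) y);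
  last exact: exprn_continuous.
by apply: cvgD; [apply: cvgMl; exact: norm_continuous | exact: cvg_cst].
Qed.

Lemma inv_1_sub_expRN_le {R : realType} (t : R) :
  0 < t -> (1 - expR (- t))^-1 <= 1 + t^-1.
Proof.
move=> t_gt0; rewrite expRN.
have := expR_ge1Dx t; set E := expR t => E_ge.
have E_gt1 : 1 < E by lra.
have -> : 1 - E^-1 = (E - 1) / E by field; rewrite gt_eqF // (lt_trans ltr01).
rewrite invf_div ler_pdivrMr ?subr_gt0 //.
have : 1 <= (E - 1) / t by rewrite ler_pdivlMr // mul1r; lra.
have -> : (1 + t^-1) * (E - 1) = E - 1 + (E - 1) / t by field; rewrite gt_eqF.
lra.
Qed.

(* With t := ln 2 / ln n this is inv_1_sub_expRN_le, and 1 <= ln n / ln 2. *)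
Lemma inv_1_sub_pow2_invln_le {R : realType} (n : R) :
  2 <= n -> (1 - 2 `^ (- (ln n)^-1))^-1 <= 2 * ln n / ln 2.
Proof.
move=> n_ge2; have ln2_gt0 : 0 < ln (2 : R) by rewrite ln_gt0 // ltr1n.
have ln_ge : ln 2 <= ln n by rewrite ler_ln ?posrE // (lt_le_trans _ n_ge2).
have ln_gt0 := lt_le_trans ln2_gt0 ln_ge.
have -> : 2 `^ (- (ln n)^-1) = expR (- (ln 2 / ln n)).
  by rewrite /powR gt_eqF // mulNr mulrC.
apply: le_trans (inv_1_sub_expRN_le _ (divr_gt0 ln2_gt0 ln_gt0)) _.
have : 1 <= ln n / ln 2 by rewrite ler_pdivlMr // mul1r.
by rewrite invf_div; lra.
Qed.

Lemma powR_invln {R : realType} (n : R) : 1 < n -> n `^ (ln n)^-1 = expR 1.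
Proof.
move=> n_gt1; rewrite /powR gt_eqF ?(lt_trans ltr01) // mulVf //.
by rewrite gt_eqF // ln_gt0.
Qed.

Lemma ln_nat_ge_eventually {R : realType} (c : R) :
  exists2 N : nat, (2 <= N)%N & forall n : nat, (N <= n)%N -> c <= ln (n%:R : R).
Proof.
exists (maxn 2 (Num.truncn (expR c)).+1); first exact: leq_maxl.
move=> n /(leq_trans (leq_maxr _ _)) n_gt; have n_gt0 : (0 < n)%N by case: n n_gt.
rewrite -ler_expR lnK ?posrE ?ltr0n //.
by apply/ltW/(lt_le_trans (truncnS_gt _)); rewrite ler_nat.
Qed.

Section damped_moments.
Context {d} {T : measurableType d} {R : realType} (P : probability T R).
Context {X : T -> R}.
Hypotheses (mX : measurable_fun setT X) (X_gt0 : forall w, 0 < X w).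
Variables (q C : R) (K : nat).
Hypotheses (C_ge0 : 0 <= C) (tail : forall k, (K <= k)%N ->
  (P [set w | (2 ^+ k <= X w)%R] <= (C * (2 `^ (- q)) ^+ k)%:E)%E).

Lemma integral_damped_pow_le (n s : R) (b m : nat) :
  0 < n -> (m <= b)%N -> (b - m)%:R <= s <= b%:R -> s < q ->
  (\int[P]_w (damped_pow n b m (X w))%:E
     <= ((2 ^+ K) ^+ b + n `^ (b%:R - s) * C * 2 `^ s / (1 - 2 `^ (s - q)))%:E)%E.
Proof.
move=> n_gt0 m_le_b s_bounds s_lt_q.
apply: le_trans (integral_le_powR_tail P mX X_gt0 (damped_pow n b m) K _ _ q C
  (n `^ (b%:R - s)) s _ C_ge0 _ s_lt_q tail _) _.
- by move=> y; exact: damped_pow_ge0.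
- by move=> x y; exact: damped_pow_homo.
- exact: measurable_damped_pow.
- exact: powR_ge0.
- by move=> y y_gt0; exact: damped_pow_le_powR.
by rewrite lee_fin lerD2r damped_pow_le_exprn // exprn_gt0.
Qed.

End damped_moments.

Section damped_moment_bounds.
Context {d} {T : measurableType d} {R : realType} (P : probability T R).
Context {X : T -> R}.
Hypotheses (mX : measurable_fun setT X) (X_gt0 : forall w, 0 < X w).
Variables (p : nat) (alpha : R).
Hypotheses (p_gt0 : (0 < p)%N) (alpha_gt1 : 1 < alpha)
  (alpha_le : alpha <= p%:R + 2).
Variables (C : R) (K : nat).
Hypotheses (C_ge0 : 0 <= C) (tail : forall k, (K <= k)%N ->
  (P [set w | (2 ^+ k <= X w)%R] <= (C * (2 `^ (- (p%:R + alpha))) ^+ k)%:E)%E).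

Let e := p%:R - alpha + 2.

Let nat_powR_ge1 {n : nat} : (0 < n)%N -> 1 <= n%:R `^ e :> R.
Proof.
move=> n_gt0; rewrite -[leLHS](powRr0 n%:R); apply: ler_powR; first by rewrite ler1n.
by rewrite /e addrAC subr_ge0.
Qed.

Lemma damped_moment_bound :
  exists C' : R, exists N : nat, forall n : nat, (N <= n)%N ->
  (\int[P]_w ((X w ^+ (2 * p)) / (X w / n%:R + 1) ^+ p.+1)%:E
     <= (C' * n%:R `^ (p%:R - alpha + 2))%:E)%E.
Proof.
pose s := p%:R + alpha - 2.
pose B := C * 2 `^ s / (1 - 2 `^ (s - (p%:R + alpha))).
exists ((2 ^+ K) ^+ (2 * p) + B), 1%N => n n_gt0.
have m_le_b : (p.+1 <= 2 * p)%N by rewrite mul2n -addnn -addn1 leq_add2l.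
have s_bounds : (2 * p - p.+1)%:R <= s <= (2 * p)%:R.
  rewrite natrB // natrM -[p.+1]addn1 natrD /s.
  by apply/andP; split; move: alpha_gt1 alpha_le; lra.
have b_sub_s : (2 * p)%:R - s = e by rewrite /e /s natrM; lra.
apply: le_trans (integral_damped_pow_le P mX X_gt0 _ _ _ C_ge0 tail _ s _ _
  _ m_le_b s_bounds _) _.
- by rewrite ltr0n.
- by rewrite /s; lra.
rewrite b_sub_s lee_fin -/e mulrDl; apply: lerD.
  by rewrite ler_peMr ?nat_powR_ge1 // exprn_ge0 // exprn_ge0.
by rewrite le_eqVlt; apply/orP; left; apply/eqP; rewrite /B; ring.
Qed.

Let ln2_gt0 : 0 < ln (2 : R). Proof. by rewrite ln_gt0 // ltr1n. Qed.

Let ln2_le_ln {n : nat} : (2 <= n)%N -> ln 2 <= ln (n%:R : R).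
Proof.
by move=> n_ge2; rewrite ler_ln ?posrE ?ler_nat // ltr0n (leq_trans _ n_ge2).
Qed.

Let powR_ln_ratio_ge1 {n : nat} :
  (2 <= n)%N -> 1 <= n%:R `^ e * (ln (n%:R : R) / ln 2).
Proof.
move=> n_ge2; rewrite -[leLHS]mulr1; apply: ler_pM => //.
  exact: nat_powR_ge1 (leq_trans _ n_ge2).
by rewrite ler_pdivlMr // mul1r ln2_le_ln.
Qed.

Lemma damped_moment_log_le (n : nat) :
  (2 <= n)%N -> (alpha - 1)^-1 <= ln (n%:R : R) ->
  (\int[P]_w (damped_pow n%:R (2 * p + 2) p.+1 (X w))%:E
     <= ((2 ^+ K) ^+ (2 * p + 2) + 2 * expR 1 * C * 2 `^ (p%:R + alpha)
          * (n%:R `^ (p%:R - alpha + 2) * (ln (n%:R : R) / ln 2)))%:E)%E.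
Proof.
move=> n_ge2 ln_ge; have n_ge2' : 2 <= n%:R :> R by rewrite ler_nat.
have := ln2_le_ln n_ge2; set L := ln (n%:R : R) => ln_ge2.
have L_gt0 := lt_le_trans ln2_gt0 ln_ge2.
have Linv_gt0 : 0 < L^-1 by rewrite invr_gt0.
pose s := p%:R + alpha - L^-1.
have m_le_b : (p.+1 <= 2 * p + 2)%N.
  by rewrite -addn1 leq_add // mul2n -addnn leq_addr.
have s_bounds : (2 * p + 2 - p.+1)%:R <= s <= (2 * p + 2)%:R.
  have Linv_le : L^-1 <= alpha - 1.
    by rewrite -[leRHS]invrK lef_pV2 ?posrE ?invr_gt0 ?subr_gt0.
  rewrite natrB // natrD natrM -[p.+1]addn1 natrD /s.
  by apply/andP; split; move: Linv_le Linv_gt0 alpha_le; lra.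
apply: le_trans (integral_damped_pow_le P mX X_gt0 _ _ _ C_ge0 tail _ s _ _
  _ m_le_b s_bounds _) _.
- by rewrite ltr0n (leq_trans _ n_ge2).
- by rewrite /s ltrBlDr ltrDl.
have -> : (2 * p + 2)%:R - s = e + L^-1 by rewrite /e /s natrD natrM; lra.
have -> : s - (p%:R + alpha) = - L^-1 by rewrite /s; lra.
rewrite gt0_powRD ?ltr0n ?(leq_trans _ n_ge2) // powR_invln; last first.
  by rewrite ltr1n (leq_trans _ n_ge2).
rewrite lee_fin -/e lerD2l.
set c := n%:R `^ e * expR 1 * C.
have -> : n%:R `^ e * expR 1 * C * 2 `^ s / (1 - 2 `^ (- L^-1))
  = c * (2 `^ s * (1 - 2 `^ (- L^-1))^-1) by rewrite /c; ring.
have -> : 2 * expR 1 * C * 2 `^ (p%:R + alpha) * (n%:R `^ e * (L / ln 2))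
  = c * (2 `^ (p%:R + alpha) * (2 * L / ln 2)) by rewrite /c; ring.
apply: ler_wpM2l; first by rewrite /c !mulr_ge0 ?powR_ge0 ?expR_ge0.
apply: ler_pM.
- exact: powR_ge0.
- rewrite invr_ge0 subr_ge0 powRN invf_le1 ?powR_gt0 //.
  by rewrite -[leLHS](powRr0 2) ler_powR ?ler1n // ltW.
- by apply: ler_powR; rewrite ?ler1n // /s lerBlDr lerDl ltW.
- exact: inv_1_sub_pow2_invln_le.
Qed.

Lemma damped_moment_log_bound :
  exists C' : R, exists N : nat, forall n : nat, (N <= n)%N ->
  (\int[P]_w ((X w ^+ (2 * p)) / (X w / n%:R + 1) ^+ p.+1 * X w ^+ 2)%:E
     <= (C' * n%:R `^ (p%:R - alpha + 2) * ln n%:R)%:E)%E.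
Proof.
have [N N_ge2 ln_ge] := ln_nat_ge_eventually ((alpha - 1)^-1 : R).
set A := (2 ^+ K) ^+ (2 * p + 2) : R.
set B := 2 * expR 1 * C * 2 `^ (p%:R + alpha).
exists ((A + B) / ln 2), N => n nN; have n_ge2 := leq_trans N_ge2 nN.
under eq_integral do rewrite mulrAC -exprD.
apply: le_trans (damped_moment_log_le _ n_ge2 (ln_ge _ nN)) _.
rewrite lee_fin -/e -/A -/B.
have -> : (A + B) / ln 2 * n%:R `^ e * ln n%:R
  = (A + B) * (n%:R `^ e * (ln n%:R / ln 2)) by ring.
rewrite mulrDl lerD2r ler_peMr ?powR_ln_ratio_ge1 //.
by rewrite exprn_ge0 // exprn_ge0.
Qed.

End damped_moment_bounds.

Lemma dyadic_tail_le {d} {T : measurableType d} {R : realType}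
    {mu : {measure set T -> \bar R}} {X : T -> R} {q C x0 : R} :
  (forall x, x0 <= x -> (mu [set w | (x <= X w)%R] <= (C * x `^ (- q))%:E)%E) ->
  forall k, (Num.truncn x0 <= k)%N ->
    (mu [set w | (2 ^+ k <= X w)%R] <= (C * (2 `^ (- q)) ^+ k)%:E)%E.
Proof.
move=> tail k k_ge; rewrite -powR_exprn //; apply/tail/ltW.
by apply: (lt_le_trans (lt_pow2_truncn x0)); rewrite ler_eXn2l // ltr1n.
Qed.

Theorem lemma8 (d : measure_display) (T : measurableType d) (R : realType)
  (P : probability T R) (X1 : {RV P >-> R}) (p : nat) (alpha : R) :
  (2 <= p)%N -> 1 < alpha -> alpha <= p%:R + 2 ->
  (forall w, 0 < X1 w) ->
  ('E_P[X1] = 1)%E ->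
  (exists C x0 : R, forall x : R, x0 <= x ->
      (P [set w | (x <= X1 w)%R] <= (C * x `^ (- (p%:R + alpha)))%:E)%E) ->
  (exists C : R, exists N : nat, forall n : nat, (N <= n)%N ->
      (\int[P]_w ((X1 w ^+ (2 * p)) / (X1 w / n%:R + 1) ^+ p.+1)%:E
        <= (C * n%:R `^ (p%:R - alpha + 2))%:E)%E)
  /\
  (exists C : R, exists N : nat, forall n : nat, (N <= n)%N ->
      (\int[P]_w ((X1 w ^+ (2 * p)) / (X1 w / n%:R + 1) ^+ p.+1 * X1 w ^+ 2)%:E
        <= (C * n%:R `^ (p%:R - alpha + 2) * ln n%:R)%:E)%E).
Proof.
move=> p_ge2 alpha_gt1 alpha_le X_gt0 _ [C [x0 tail_x0]].
have mX : measurable_fun setT X1 := measurable_funPT X1.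
have p_gt0 : (0 < p)%N := ltnW p_ge2.
have tail := dyadic_tail_le tail_x0.
have C_ge0 : 0 <= C.
  move: (tail _ (leqnn _)) => /(le_trans (measure_ge0 P _)).
  by rewrite lee_fin pmulr_lge0 // exprn_gt0 // powR_gt0.
split.
- exact: (damped_moment_bound P mX X_gt0 _ _ p_gt0 alpha_gt1 alpha_le _ _ C_ge0 tail).
- exact: (damped_moment_log_bound P mX X_gt0 _ _ alpha_gt1 alpha_le _ _ C_ge0 tail).
Qed.
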